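(* Let $\rho>0$, $\xi\in\mathbb{R}$, and $H=\frac{1}{2(1+\rho u^2)}\big(u^2(P_u^2+P_y^2)+\xi\big)$ on $(u,y)\in(0,\infty)\times\mathbb{R}$. On the level set $H=E$, $P_y=L>0$, if $2E<\xi$ and $2\rho E>L^2$, the projections to the $(u,y)$-plane of the trajectories of the Hamiltonian flow have equation $$u^2-\frac{2\rho E-L^2}{L^2}(y-y_0)^2=u_*^2,\qquad u\in(u_*,+\infty),$$ for some $y_0\in\mathbb{R}$, where $u_*=\sqrt{\frac{\xi-2E}{2\rho E-L^2}}$. *)

From Stdlib Require Import Reals.
From Coquelicot Require Import Coquelicot.
Open Scope R_scope.

Definition Ham (rho xi u y Pu Py : R) : R :=
  (u ^ 2 * (Pu ^ 2 + Py ^ 2) + xi) / (2 * (1 + rho * u ^ 2)).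

Definition in_interval (a b : Rbar) (t : R) : Prop :=
  Rbar_lt a t /\ Rbar_lt t b.

Definition hamiltonian_trajectory (rho xi : R) (a b : Rbar)
  (u y Pu Py : R -> R) : Prop :=
  Rbar_lt a b /\
  forall t, in_interval a b t ->
    0 < u t /\
    is_derive u t (Derive (fun p => Ham rho xi (u t) (y t) p (Py t)) (Pu t)) /\
    is_derive y t (Derive (fun p => Ham rho xi (u t) (y t) (Pu t) p) (Py t)) /\
    is_derive Pu t (- Derive (fun q => Ham rho xi q (y t) (Pu t) (Py t)) (u t)) /\
    is_derive Py t (- Derive (fun q => Ham rho xi (u t) q (Pu t) (Py t)) (y t)).

From Stdlib Require Import Reals Lra Psatz Classical.
From Coquelicot Require Import Coquelicot.
Open Scope R_scope.

(* With c = 2 rho E - L^2, Hamilton's equations on the level set give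
   y' = L u^2 / (1 + rho u^2) and (u P_u)' = c u^2 / (1 + rho u^2), so
   c y - L u P_u is a first integral.  Eliminating P_u between it and the
   energy relation u^2 P_u^2 = c u^2 - (xi - 2E) yields the hyperbola. *)

Lemma Ham_denom_gt0 (rho U : R) : 0 < rho -> 0 < 1 + rho * U ^ 2.
Proof. intros; nra. Qed.

Lemma Derive_Ham_Pu (rho xi U Y PU PY : R) : 0 < rho ->
  Derive (fun p => Ham rho xi U Y p PY) PU = U ^ 2 * PU / (1 + rho * U ^ 2).
Proof.
intros Hrho; pose proof (Ham_denom_gt0 rho U Hrho).
apply is_derive_unique; unfold Ham; auto_derive; [lra | field; lra].
Qed.

Lemma Derive_Ham_Py (rho xi U Y PU PY : R) : 0 < rho ->
  Derive (fun p => Ham rho xi U Y PU p) PY = U ^ 2 * PY / (1 + rho * U ^ 2).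
Proof.
intros Hrho; pose proof (Ham_denom_gt0 rho U Hrho).
apply is_derive_unique; unfold Ham; auto_derive; [lra | field; lra].
Qed.

Lemma Derive_Ham_u (rho xi U Y PU PY : R) : 0 < rho ->
  Derive (fun q => Ham rho xi q Y PU PY) U
  = U * (PU ^ 2 + PY ^ 2 - rho * xi) / (1 + rho * U ^ 2) ^ 2.
Proof.
intros Hrho; pose proof (Ham_denom_gt0 rho U Hrho).
apply is_derive_unique; unfold Ham; auto_derive; [lra | field; lra].
Qed.

Lemma Ham_level_set (rho xi E U Y PU PY : R) : 0 < rho ->
  Ham rho xi U Y PU PY = E ->
  U ^ 2 * PU ^ 2 = (2 * rho * E - PY ^ 2) * U ^ 2 - (xi - 2 * E).
Proof.
intros Hrho HE; pose proof (Ham_denom_gt0 rho U Hrho).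
unfold Ham in HE.
apply (f_equal (fun z => z * (2 * (1 + rho * U ^ 2)))) in HE.
field_simplify in HE; lra.
Qed.

Lemma in_interval_between (a b : Rbar) (t1 t2 s : R) :
  in_interval a b t1 -> in_interval a b t2 -> t1 <= s <= t2 ->
  in_interval a b s.
Proof.
intros [Ha1 _] [_ Hb2] [H1 H2]; split.
- apply Rbar_lt_le_trans with t1; [exact Ha1 | simpl; lra].
- apply Rbar_le_lt_trans with t2; [simpl; lra | exact Hb2].
Qed.

Lemma is_derive_0_constant_on_interval (a b : Rbar) (f : R -> R) :
  (forall t, in_interval a b t -> is_derive f t 0) ->
  forall t s, in_interval a b t -> in_interval a b s -> f t = f s.
Proof.
intros Hf t s Ht Hs.
destruct (Rtotal_order t s) as [Hts | [-> | Hst]]; [| reflexivity |].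
- apply (eq_is_derive f); [| exact Hts].
  intros r Hr; apply Hf; exact (in_interval_between a b t s r Ht Hs Hr).
- symmetry; apply (eq_is_derive f); [| exact Hst].
  intros r Hr; apply Hf; exact (in_interval_between a b s t r Hs Ht Hr).
Qed.

Lemma hyperbola_of_first_integrals (c d L U PU Y y0 : R) :
  0 < c -> 0 < L -> 0 < d -> 0 < U ->
  c * (Y - y0) = L * (U * PU) ->
  U ^ 2 * PU ^ 2 = c * U ^ 2 - d ->
  U ^ 2 - c / L ^ 2 * (Y - y0) ^ 2 = sqrt (d / c) ^ 2 /\ sqrt (d / c) <= U.
Proof.
intros Hc HL Hd HU HY Henergy.
assert (Hdc : d / c = U ^ 2 - U ^ 2 * PU ^ 2 / c) by (rewrite Henergy; field; lra).
assert (HYy0 : Y - y0 = L / c * (U * PU))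
  by (apply (Rmult_eq_reg_l c); [rewrite HY; field |]; lra).
split.
- rewrite pow2_sqrt by (apply Rlt_le, Rdiv_lt_0_compat; lra).
  rewrite HYy0, Hdc; field; lra.
- rewrite <- (sqrt_pow2 U) by lra.
  apply sqrt_le_1_alt; rewrite Hdc.
  assert (0 <= U ^ 2 * PU ^ 2 / c) by (apply Rdiv_le_0_compat; nra).
  lra.
Qed.

Section LevelSetTrajectory.

Variables (rho xi E L : R) (a b : Rbar) (u y Pu Py : R -> R).
Hypothesis rho_gt0 : 0 < rho.
Hypothesis trajectory : hamiltonian_trajectory rho xi a b u y Pu Py.
Hypothesis energy : forall t, in_interval a b t -> Ham rho xi (u t) (y t) (Pu t) (Py t) = E.
Hypothesis momentum : forall t, in_interval a b t -> Py t = L.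

Let c := 2 * rho * E - L ^ 2.

Lemma trajectory_energy t : in_interval a b t ->
  u t ^ 2 * Pu t ^ 2 = c * u t ^ 2 - (xi - 2 * E).
Proof.
intros Ht; pose proof (Ham_level_set rho xi E _ _ _ _ rho_gt0 (energy t Ht)) as H.
rewrite (momentum t Ht) in H; exact H.
Qed.

Lemma trajectory_derive_y t : in_interval a b t ->
  is_derive y t (L * u t ^ 2 / (1 + rho * u t ^ 2)).
Proof.
intros Ht; destruct (proj2 trajectory t Ht) as (_ & _ & Dy & _).
rewrite Derive_Ham_Py, (momentum t Ht) in Dy by exact rho_gt0.
replace (L * u t ^ 2) with (u t ^ 2 * L) by ring; exact Dy.
Qed.

Lemma trajectory_derive_uPu t : in_interval a b t ->
  is_derive (fun s => u s * Pu s) t (c * u t ^ 2 / (1 + rho * u t ^ 2)).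
Proof.
intros Ht; destruct (proj2 trajectory t Ht) as (_ & Du & _ & DPu & _).
rewrite Derive_Ham_Pu in Du by exact rho_gt0.
rewrite Derive_Ham_u, (momentum t Ht) in DPu by exact rho_gt0.
pose proof (Ham_denom_gt0 rho (u t) rho_gt0).
pose proof (trajectory_energy t Ht) as Henergy.
eapply is_derive_ext_loc; [apply filter_forall; reflexivity |].
replace (c * u t ^ 2 / (1 + rho * u t ^ 2))
  with (mult (u t ^ 2 * Pu t / (1 + rho * u t ^ 2)) (Pu t)
        + mult (u t) (- (u t * (Pu t ^ 2 + L ^ 2 - rho * xi) / (1 + rho * u t ^ 2) ^ 2))).
- apply (is_derive_mult u Pu); [exact Du | exact DPu | intros; apply Rmult_comm].
- unfold mult; simpl.
  assert (Hnum : u t ^ 2 * Pu t ^ 2 * (rho * u t ^ 2) - u t ^ 2 * L ^ 2 + rho * xi * u t ^ 2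
                 = c * u t ^ 2 * (1 + rho * u t ^ 2))
    by (rewrite Henergy; unfold c; ring).
  transitivity ((u t ^ 2 * Pu t ^ 2 * (rho * u t ^ 2) - u t ^ 2 * L ^ 2
                 + rho * xi * u t ^ 2) / (1 + rho * u t ^ 2) ^ 2);
    [field; lra | rewrite Hnum; field; lra].
Qed.

Lemma trajectory_first_integral t s : in_interval a b t -> in_interval a b s ->
  c * y t - L * (u t * Pu t) = c * y s - L * (u s * Pu s).
Proof.
apply (is_derive_0_constant_on_interval a b (fun r => c * y r - L * (u r * Pu r))).
intros r Hr; pose proof (Ham_denom_gt0 rho (u r) rho_gt0).
replace 0 with (c * (L * u r ^ 2 / (1 + rho * u r ^ 2))
                - L * (c * u r ^ 2 / (1 + rho * u r ^ 2))) by (field; lra).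
apply (is_derive_minus (fun r => c * y r) (fun r => L * (u r * Pu r))).
- apply (is_derive_scal y); exact (trajectory_derive_y r Hr).
- apply (is_derive_scal (fun s => u s * Pu s)); exact (trajectory_derive_uPu r Hr).
Qed.

End LevelSetTrajectory.

Theorem proposition16 (rho xi E L : R) (a b : Rbar) (u y Pu Py : R -> R) :
  0 < rho -> 0 < L -> 2 * E < xi -> 2 * rho * E > L ^ 2 ->
  hamiltonian_trajectory rho xi a b u y Pu Py ->
  (forall t, in_interval a b t -> Ham rho xi (u t) (y t) (Pu t) (Py t) = E) ->
  (forall t, in_interval a b t -> Py t = L) ->
  exists y0 : R,
    forall t, in_interval a b t ->
      (u t) ^ 2 - (2 * rho * E - L ^ 2) / L ^ 2 * (y t - y0) ^ 2
        = (sqrt ((xi - 2 * E) / (2 * rho * E - L ^ 2))) ^ 2 /\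
      sqrt ((xi - 2 * E) / (2 * rho * E - L ^ 2)) <= u t.
Proof.
intros Hrho HL Hxi Hc Htraj Henergy Hmomentum.
set (c := 2 * rho * E - L ^ 2).
assert (Hcpos : 0 < c) by (unfold c; lra).
destruct (classic (exists t0, in_interval a b t0)) as [[t0 Ht0] | Hempty].
2: { exists 0; intros t Ht; exfalso; apply Hempty; exists t; exact Ht. }
exists (y t0 - L / c * (u t0 * Pu t0)); intros t Ht.
apply hyperbola_of_first_integrals with (PU := Pu t); try lra.
- exact (proj1 (proj2 Htraj t Ht)).
- pose proof (trajectory_first_integral rho xi E L a b u y Pu Py Hrho Htraj
                Henergy Hmomentum t t0 Ht Ht0) as Hfirst.
  fold c in Hfirst.
  replace (c * (y t - (y t0 - L / c * (u t0 * Pu t0))))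
    with (c * y t - (c * y t0 - L * (u t0 * Pu t0))) by (field; lra).
  lra.
- exact (trajectory_energy rho xi E L a b u y Pu Py Hrho Henergy Hmomentum t Ht).
Qed.
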